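(* Let $P\in\Delta_{\mathcal{T},\mathcal{X},\mathcal{Y}}$ such that under $P$, $T$ is conditionally independent of $X$ given $Y$, and $T$ is conditionally independent of $Y$ given $X$. If there exist $x_0\in\mathcal{X}$, $y_0\in\mathcal{Y}$ with $P(X=x_0,Y=y_0)>0$, $H_P(X\mid Y=y_0)\neq 0$ and $H_P(Y\mid X=x_0)\ne 0$, then $\arg\max_{Q\in\Delta_P}H_Q(T\mid X,Y)$ contains more than one element.
   Context: $T,X,Y$ are random variables with finite state spaces $\mathcal{T},\mathcal{X},\mathcal{Y}$; $\Delta_{\mathcal{T},\mathcal{X},\mathcal{Y}}$ is the set of all joint distributions on $\mathcal{T}\times\mathcal{X}\times\mathcal{Y}$. For $P\in\Delta_{\mathcal{T},\mathcal{X},\mathcal{Y}}$, $\Delta_P=\{Q\in\Delta_{\mathcal{T},\mathcal{X},\mathcal{Y}}: Q(X=x,T=t)=P(X=x,T=t),\ Q(Y=y,T=t)=P(Y=y,T=t)\ \forall x,y,t\}$. $H_P(X\mid Y=y_0)$ is the entropy of the conditional distribution of $X$ given $Y=y_0$ under $P$; $H_Q(T\mid X,Y)$ the conditional entropy under $Q$. *)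

From Stdlib Require Import Reals.
From mathcomp Require Import all_boot.
Open Scope R_scope.

Definition fsum {A : finType} (f : A -> R) : R :=
  List.fold_right (fun a acc => f a + acc) 0 (enum A).

Section Dist.
Context {T X Y : finType}.

Definition is_dist (P : T -> X -> Y -> R) : Prop :=
  (forall t x y, 0 <= P t x y) /\
  fsum (fun t => fsum (fun x => fsum (fun y => P t x y))) = 1.

Definition margTX (P : T -> X -> Y -> R) (t : T) (x : X) : R := fsum (fun y => P t x y).
Definition margTY (P : T -> X -> Y -> R) (t : T) (y : Y) : R := fsum (fun x => P t x y).
Definition margXY (P : T -> X -> Y -> R) (x : X) (y : Y) : R := fsum (fun t => P t x y).
Definition margX (P : T -> X -> Y -> R) (x : X) : R := fsum (fun y => margXY P x y).
Definition margY (P : T -> X -> Y -> R) (y : Y) : R := fsum (fun x => margXY P x y).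

Definition DeltaP (P Q : T -> X -> Y -> R) : Prop :=
  is_dist Q /\
  (forall t x, margTX Q t x = margTX P t x) /\
  (forall t y, margTY Q t y = margTY P t y).

Definition CI_T_X_given_Y (P : T -> X -> Y -> R) : Prop :=
  forall t x y, P t x y * margY P y = margTY P t y * margXY P x y.

Definition CI_T_Y_given_X (P : T -> X -> Y -> R) : Prop :=
  forall t x y, P t x y * margX P x = margTX P t x * margXY P x y.

Definition xlnx (p : R) : R := if Rlt_dec 0 p then p * ln p else 0.

Definition H_X_given_Y_eq (P : T -> X -> Y -> R) (y0 : Y) : R :=
  - fsum (fun x => xlnx (margXY P x y0 / margY P y0)).

Definition H_Y_given_X_eq (P : T -> X -> Y -> R) (x0 : X) : R :=
  - fsum (fun y => xlnx (margXY P x0 y / margX P x0)).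

Definition H_T_given_XY (Q : T -> X -> Y -> R) : R :=
  - fsum (fun t => fsum (fun x => fsum (fun y =>
      if Rlt_dec 0 (Q t x y) then Q t x y * ln (Q t x y / margXY Q x y) else 0))).

Definition in_argmax_condH (P Q : T -> X -> Y -> R) : Prop :=
  DeltaP P Q /\ forall Q', DeltaP P Q' -> H_T_given_XY Q' <= H_T_given_XY Q.

End Dist.

From HB Require Import structures.
From Stdlib Require Import Reals Lra Classical.
From mathcomp Require Import all_boot.
Open Scope R_scope.

(* By the log-sum inequality, H_Q(T | X, Y) <= H_Q(T | Y) for every Q, with
   equality when T is independent of X given Y under Q.  On Delta_P the right
   hand side is the constant H_P(T | Y), so every Q in Delta_P satisfying
   T _|_ X | Y is a maximiser; P is one.  When both conditional independences
   hold, the law c of T given (x0, y0) is also the law of T given y0 and given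
   y1 for any y1 with P(x0, y1) > 0.  The nonzero conditional entropies provide
   such y1 <> y0 and some x1 <> x0 with P(x1, y0) > 0, and moving mass
   eps c(t) along the 2x2 rectangle {x0, x1} x {y0, y1} with signs + - / - +
   keeps both marginals and the independence T _|_ X | Y: a second maximiser. *)

Lemma Rplus_associative : associative Rplus.
Proof. by move=> x y z; rewrite Rplus_assoc. Qed.

HB.instance Definition _ :=
  Monoid.isComLaw.Build R 0 Rplus Rplus_associative Rplus_comm Rplus_0_l.
HB.instance Definition _ := Monoid.isMulLaw.Build R 0 Rmult Rmult_0_l Rmult_0_r.
HB.instance Definition _ :=
  Monoid.isAddLaw.Build R Rmult Rplus Rmult_plus_distr_r Rmult_plus_distr_l.

Section FiniteSums.
Context {A : finType}.
Implicit Types (f g : A -> R) (a : A).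

Lemma fsum_big f : fsum f = \big[Rplus/0]_(a : A) f a.
Proof. by rewrite -big_enum /= unlock. Qed.

Lemma fsum_ext f g : (forall a, f a = g a) -> fsum f = fsum g.
Proof. by move=> fg; rewrite !fsum_big; apply: eq_bigr => a _. Qed.

Lemma fsumD f g : fsum (fun a => f a + g a) = fsum f + fsum g.
Proof. by rewrite !fsum_big big_split. Qed.

Lemma fsumMl (k : R) f : fsum (fun a => k * f a) = k * fsum f.
Proof. by rewrite !fsum_big big_distrr. Qed.

Lemma fsumMr (k : R) f : fsum (fun a => f a * k) = fsum f * k.
Proof. by rewrite !fsum_big big_distrl. Qed.

Lemma fsum0 : fsum (fun _ : A => 0) = 0.
Proof. by rewrite fsum_big big1. Qed.

Lemma fsumB f g : fsum (fun a => f a - g a) = fsum f - fsum g.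
Proof.
rewrite (fsum_ext _ (fun a => f a + -1 * g a)) => [|a]; last ring.
by rewrite fsumD fsumMl; ring.
Qed.

Lemma fsum_le f g : (forall a, f a <= g a) -> fsum f <= fsum g.
Proof.
move=> fg; rewrite !fsum_big.
by apply: (big_ind2 Rle) => [|x1 x2 y1 y2|a _]; [lra|lra|apply: fg].
Qed.

Lemma fsum_ge0 f : (forall a, 0 <= f a) -> 0 <= fsum f.
Proof. by move=> f_ge0; rewrite fsum_big; apply: big_ind => [|x y|a _]; [lra|lra|]. Qed.

Lemma fsum_ge_term f a : (forall b, 0 <= f b) -> f a <= fsum f.
Proof.
move=> f_ge0; rewrite fsum_big (bigD1 a) //=.
suff : 0 <= \big[Rplus/0]_(b | b != a) f b by lra.
by apply: big_ind => [|x y|b _]; [lra|lra|].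
Qed.

Lemma fsum_point {f a} : (forall b, b <> a -> f b = 0) -> fsum f = f a.
Proof.
move=> f0; rewrite fsum_big (bigD1 a) //= big1 => [|b /eqP]; first ring.
exact: f0.
Qed.

Lemma fsum_indicator a : fsum (fun x => if x == a then 1 else 0) = 1.
Proof. by rewrite (fsum_point (a := a)) ?eqxx // => x /eqP /negbTE ->. Qed.

End FiniteSums.

Lemma fsum_exchange {A B : finType} (f : A -> B -> R) :
  fsum (fun a => fsum (fun b => f a b)) = fsum (fun b => fsum (fun a => f a b)).
Proof.
rewrite fsum_big (eq_bigr _ (fun a _ => fsum_big (f a))) exchange_big fsum_big.
by apply: eq_bigr => b _; rewrite fsum_big.
Qed.

Lemma entropy_point_mass {A : finType} (f : A -> R) (a : A) :
  (forall b, b <> a -> f b = 0) -> 0 < f a ->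
  fsum (fun x => xlnx (f x / fsum f)) = 0.
Proof.
move=> f0 fa_gt0; rewrite (fsum_point f0) (fsum_point (a := a)) => [|b ba].
- rewrite /Rdiv Rinv_r; last lra.
  by rewrite /xlnx ln_1 Rmult_0_r; case: is_left.
- by rewrite f0 // /Rdiv !Rmult_0_l /xlnx Rmult_0_l; case: is_left.
Qed.

Lemma entropy_neq0_support {A : finType} {f : A -> R} {a : A} :
  (forall b, 0 <= f b) -> 0 < f a ->
  - fsum (fun x => xlnx (f x / fsum f)) <> 0 -> exists2 b, b <> a & 0 < f b.
Proof.
move=> f_ge0 fa_gt0 H_neq0; apply: NNPP => no_b; apply: H_neq0.
rewrite (entropy_point_mass f a) //; first ring.
move=> b ba; have := f_ge0 b; case: (Rlt_dec 0 (f b)) => [fb_gt0|]; last lra.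
by case: no_b; exists b.
Qed.

(* [H_T_given_XY] unfolds to a sum of [xlnxy] terms. *)
Definition xlnxy (p q : R) : R := if Rlt_dec 0 p then p * ln (p / q) else 0.

Lemma ln_le_sub1 u : 0 < u -> ln u <= u - 1.
Proof. by move=> u_gt0; have := exp_ineq1_le (ln u); rewrite exp_ln //; lra. Qed.

Lemma ln_div x y : 0 < x -> 0 < y -> ln (x / y) = ln x - ln y.
Proof.
move=> x_gt0 y_gt0; have iy_gt0 := Rinv_0_lt_compat _ y_gt0.
by rewrite /Rdiv ln_mult // ln_Rinv.
Qed.

Lemma xlnxy_ge p q k : 0 <= p -> 0 <= q -> (0 < p -> 0 < q) -> 0 < k ->
  p * ln k + p - q * k <= xlnxy p q.
Proof.
move=> p_ge0 q_ge0 pq k_gt0; rewrite /xlnxy.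
case: Rlt_dec => [p_gt0|p_le0] /=; last by have -> : p = 0 by [lra]; nra.
have q_gt0 := pq p_gt0.
have u_gt0 : 0 < q * k / p by apply: Rdiv_lt_0_compat => //; nra.
have ln_le : p * ln (q * k / p) <= q * k - p.
  have := Rmult_le_compat_l p _ _ (Rlt_le _ _ p_gt0) (ln_le_sub1 _ u_gt0).
  by have -> : p * (q * k / p - 1) = q * k - p by field; lra.
have -> : ln (p / q) = ln k - ln (q * k / p).
  by rewrite !ln_div ?ln_mult //; [ring|nra].
rewrite Rmult_minus_distr_l; lra.
Qed.

Lemma log_sum_inequality {A : finType} (a b : A -> R) :
  (forall x, 0 <= a x) -> (forall x, 0 <= b x) -> (forall x, 0 < a x -> 0 < b x) ->
  xlnxy (fsum a) (fsum b) <= fsum (fun x => xlnxy (a x) (b x)).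
Proof.
move=> a_ge0 b_ge0 ab; rewrite {1}/xlnxy.
case: Rlt_dec => [A_gt0|A_le0] /=; last first.
  apply: fsum_ge0 => x; rewrite /xlnxy.
  case: Rlt_dec => [ax_gt0|_] /=; last lra.
  by have := fsum_ge_term _ x a_ge0; lra.
have B_gt0 : 0 < fsum b.
  apply: Rnot_le_lt => B_le0; suff : fsum a = 0 by lra.
  transitivity (fsum (fun _ : A => 0)); last exact: fsum0.
  apply: fsum_ext => x; case: (Rlt_le_dec 0 (a x)) => [ax_gt0|];
    last by have := a_ge0 x; lra.
  by have := ab x ax_gt0; have := fsum_ge_term _ x b_ge0; lra.
set k := fsum a / fsum b.
have k_gt0 : 0 < k by apply: Rdiv_lt_0_compat.
have lower := fsum_le _ _ (fun x => xlnxy_ge _ _ _ (a_ge0 x) (b_ge0 x) (ab x) k_gt0).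
rewrite fsumB fsumD !fsumMr in lower.
have Bk : fsum b * k = fsum a by rewrite /k; field; lra.
lra.
Qed.

Lemma xlnxy_proportional p q k : 0 <= p -> p = k * q -> xlnxy p q = p * ln k.
Proof.
move=> p_ge0 pkq; rewrite /xlnxy.
case: Rlt_dec => [p_gt0|p_le0] /=; last by have -> : p = 0 by [lra]; ring.
have q_neq0 : q <> 0 by move=> q0; rewrite q0 Rmult_0_r in pkq; lra.
by have -> : p / q = k by rewrite pkq; field.
Qed.

Lemma fsum_xlnxy_proportional {A : finType} (a b : A -> R) k :
  (forall x, 0 <= a x) -> (forall x, a x = k * b x) ->
  fsum (fun x => xlnxy (a x) (b x)) = xlnxy (fsum a) (fsum b).
Proof.
move=> a_ge0 akb.
rewrite (fsum_ext _ (fun x => ln k * a x)) => [|x]; last first.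
  by rewrite (xlnxy_proportional _ _ _ (a_ge0 x) (akb x)) Rmult_comm.
rewrite fsumMl (xlnxy_proportional _ _ k); first ring.
- exact: fsum_ge0.
- by rewrite -fsumMl; apply: fsum_ext.
Qed.

Section ConditionalEntropy.
Context {T X Y : finType}.
Implicit Types P Q : T -> X -> Y -> R.

Definition cond_T_given_Y Q t y : R := margTY Q t y / margY Q y.

Definition H_T_given_Y Q : R :=
  - fsum (fun t => fsum (fun y => xlnxy (margTY Q t y) (margY Q y))).

Definition nonneg Q : Prop := forall t x y, 0 <= Q t x y.

Lemma margY_sum_margTY Q y : margY Q y = fsum (fun t => margTY Q t y).
Proof. exact: fsum_exchange. Qed.

Lemma margXY_ge0 Q x y : nonneg Q -> 0 <= margXY Q x y.
Proof. by move=> Q_ge0; apply: fsum_ge0 => t. Qed.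

Lemma margXY_le_margY Q x y : nonneg Q -> margXY Q x y <= margY Q y.
Proof.
move=> Q_ge0; apply: (fsum_ge_term (fun x => margXY Q x y)) => x'.
exact: margXY_ge0.
Qed.

Lemma H_T_given_Y_margTY P Q :
  (forall t y, margTY Q t y = margTY P t y) -> H_T_given_Y Q = H_T_given_Y P.
Proof.
move=> QP; have QPy y : margY Q y = margY P y.
  by rewrite !margY_sum_margTY; apply: fsum_ext.
by congr Ropp; apply: fsum_ext => t; apply: fsum_ext => y; rewrite QP QPy.
Qed.

Lemma H_T_given_XY_le_H_T_given_Y Q : nonneg Q -> H_T_given_XY Q <= H_T_given_Y Q.
Proof.
move=> Q_ge0; apply: Ropp_le_contravar; apply: fsum_le => t.
rewrite fsum_exchange; apply: fsum_le => y.
apply: log_sum_inequality => [x|x|x Q_gt0] //; first exact: fsum_ge0.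
by have := fsum_ge_term _ t (fun t => Q_ge0 t x y); rewrite -/(margXY Q x y); lra.
Qed.

Lemma CI_T_X_given_Y_factor Q : nonneg Q -> CI_T_X_given_Y Q ->
  forall t x y, Q t x y = cond_T_given_Y Q t y * margXY Q x y.
Proof.
move=> Q_ge0 CI t x y; rewrite /cond_T_given_Y.
have Q_le_TY : Q t x y <= margTY Q t y by apply: fsum_ge_term => x'.
have TY_le_Y : margTY Q t y <= margY Q y.
  rewrite margY_sum_margTY; apply: (fsum_ge_term (fun t' => margTY Q t' y)) => t'.
  exact: fsum_ge0.
have [Y0|Y_neq0] := Req_dec (margY Q y) 0.
  rewrite Y0 Rdiv_0_r Rmult_0_l; have := Q_ge0 t x y; lra.
by apply: (Rmult_eq_reg_r (margY Q y)) => //; rewrite CI; field.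
Qed.

Lemma H_T_given_XY_CI Q : nonneg Q -> CI_T_X_given_Y Q ->
  H_T_given_XY Q = H_T_given_Y Q.
Proof.
move=> Q_ge0 CI; congr Ropp; apply: fsum_ext => t.
rewrite fsum_exchange; apply: fsum_ext => y.
apply: (fsum_xlnxy_proportional _ _ (cond_T_given_Y Q t y)) => x.
  exact: Q_ge0.
exact: CI_T_X_given_Y_factor.
Qed.

Lemma in_argmax_condH_CI P Q : DeltaP P Q -> CI_T_X_given_Y Q -> in_argmax_condH P Q.
Proof.
move=> DQ CI; split=> // Q' [[Q'_ge0 _] [_ Q'TY]].
have [[Q_ge0 _] [_ QTY]] := DQ.
rewrite (H_T_given_XY_CI _ Q_ge0 CI) (H_T_given_Y_margTY _ _ QTY).
rewrite -(H_T_given_Y_margTY _ _ Q'TY).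
exact: H_T_given_XY_le_H_T_given_Y.
Qed.

End ConditionalEntropy.

(* Both sides are the law of T given X = x. *)
Lemma cond_T_given_Y_row {T X Y : finType} {P : T -> X -> Y -> R} {x y y'} :
  nonneg P -> CI_T_X_given_Y P -> CI_T_Y_given_X P ->
  0 < margXY P x y -> 0 < margXY P x y' ->
  forall t, cond_T_given_Y P t y = cond_T_given_Y P t y'.
Proof.
move=> P_ge0 CIY CIX m m' t.
(* [CI_T_Y_given_X P] is [CI_T_X_given_Y] of the transposed law, by conversion. *)
pose P' t y x := P t x y.
have factorX z : P t x z = margTX P t x / margX P x * margXY P x z.
  exact: (@CI_T_X_given_Y_factor _ _ _ P' (fun t y x => P_ge0 t x y)
            (fun t y x => CIX t x y) t z x).
have condX z : 0 < margXY P x z -> cond_T_given_Y P t z = margTX P t x / margX P x.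
  move=> mz; apply: (Rmult_eq_reg_r (margXY P x z)); last lra.
  by rewrite -factorX -CI_T_X_given_Y_factor.
by rewrite condX // condX.
Qed.

Section Perturbation.
Context {T X Y : finType}.

Definition perturb (P : T -> X -> Y -> R) (c : T -> R) (d : X -> R) (e : Y -> R)
    t x y : R :=
  P t x y + c t * d x * e y.

Context {P : T -> X -> Y -> R} {c : T -> R} {d : X -> R} {e : Y -> R}.
Hypotheses (sum_c : fsum c = 1) (sum_d : fsum d = 0) (sum_e : fsum e = 0).
Let Q := perturb P c d e.

Lemma margTX_perturb t x : margTX Q t x = margTX P t x.
Proof. by rewrite /margTX /Q /perturb fsumD fsumMl sum_e Rmult_0_r Rplus_0_r. Qed.

Lemma margTY_perturb t y : margTY Q t y = margTY P t y.
Proof.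
by rewrite /margTY /Q /perturb fsumD fsumMr fsumMl sum_d Rmult_0_r Rmult_0_l Rplus_0_r.
Qed.

Lemma margXY_perturb x y : margXY Q x y = margXY P x y + d x * e y.
Proof. by rewrite /margXY /Q /perturb fsumD !fsumMr sum_c Rmult_1_l. Qed.

Lemma DeltaP_perturb : is_dist P -> nonneg Q -> DeltaP P Q.
Proof.
move=> [_ sum_P] Q_ge0.
split; last by split; [exact: margTX_perturb|exact: margTY_perturb].
split=> //; rewrite -sum_P; apply: fsum_ext => t; apply: fsum_ext => x.
exact: margTX_perturb.
Qed.

Lemma CI_T_X_given_Y_perturb : CI_T_X_given_Y P ->
  (forall t y, e y <> 0 -> margTY P t y = c t * margY P y) -> CI_T_X_given_Y Q.
Proof.
move=> CI ce t x y.
have -> : margY Q y = margY P y.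
  by rewrite !margY_sum_margTY; apply: fsum_ext => t'; exact: margTY_perturb.
rewrite margTY_perturb margXY_perturb /Q /perturb.
have [e0|e_neq0] := Req_dec (e y) 0; first by rewrite e0 !Rmult_0_r !Rplus_0_r.
by rewrite Rmult_plus_distr_r CI ce //; ring.
Qed.

End Perturbation.

Definition signed_pair {A : finType} (a b x : A) : R :=
  (if x == a then 1 else 0) - (if x == b then 1 else 0).

Lemma fsum_signed_pair {A : finType} (a b : A) : fsum (signed_pair a b) = 0.
Proof.
by rewrite /signed_pair fsumB !fsum_indicator Rminus_diag.
Qed.

Lemma signed_pair_l {A : finType} (a b : A) : a <> b -> signed_pair a b a = 1.
Proof. by rewrite /signed_pair eqxx => /eqP /negbTE ->; ring. Qed.

Lemma signed_pair_cases {A : finType} {a b : A} x : a <> b ->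
  [\/ x = a /\ signed_pair a b x = 1, x = b /\ signed_pair a b x = -1
    | signed_pair a b x = 0].
Proof.
rewrite /signed_pair => ab; case: eqP => [->|xa]; case: eqP => [xb|xb] //.
- by constructor 1; split=> //; ring.
- by constructor 2; split=> //; ring.
- by constructor 3; ring.
Qed.

Lemma perturb_rectangle_ge0 {T X Y : finType} (P : T -> X -> Y -> R) c x0 x1 y0 y1 eps :
  nonneg P -> (forall t, 0 <= c t) -> x0 <> x1 -> y0 <> y1 ->
  (forall t, P t x0 y1 = c t * margXY P x0 y1) ->
  (forall t, P t x1 y0 = c t * margXY P x1 y0) ->
  0 <= eps -> eps <= margXY P x0 y1 -> eps <= margXY P x1 y0 ->
  nonneg (perturb P c (fun x => eps * signed_pair x0 x1 x) (signed_pair y0 y1)).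
Proof.
move=> P_ge0 c_ge0 x01 y01 P01 P10 eps_ge0 eps_le01 eps_le10 t x y.
rewrite /perturb; have := P_ge0 t x y; have := c_ge0 t.
case: (signed_pair_cases x x01) => [[-> ->]|[-> ->]|->];
case: (signed_pair_cases y y01) => [[-> ->]|[-> ->]|->]; try nra.
- by rewrite P01; nra.
- by rewrite P10; nra.
Qed.

Lemma exists_CI_in_DeltaP_neq {T X Y : finType} {P : T -> X -> Y -> R} {x0 x1 y0 y1} :
  is_dist P -> CI_T_X_given_Y P -> CI_T_Y_given_X P -> x0 <> x1 -> y0 <> y1 ->
  0 < margXY P x0 y0 -> 0 < margXY P x1 y0 -> 0 < margXY P x0 y1 ->
  exists Q, [/\ DeltaP P Q, CI_T_X_given_Y Q & Q <> P].
Proof.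
move=> HP CIY CIX x01 y01 m00 m10 m01; have P_ge0 : nonneg P := HP.1.
pose c t := cond_T_given_Y P t y0.
pose eps := Rmin (margXY P x1 y0) (margXY P x0 y1).
have eps_gt0 : 0 < eps by apply: Rmin_pos.
pose d x := eps * signed_pair x0 x1 x.
pose e := signed_pair y0 y1.
have cond_row y : 0 < margXY P x0 y -> forall t, cond_T_given_Y P t y = c t.
  by move=> m t; rewrite /c (cond_T_given_Y_row P_ge0 CIY CIX m m00).
have Y_gt0 y : 0 < margXY P x0 y -> 0 < margY P y.
  by have := margXY_le_margY _ x0 y P_ge0; lra.
have c_ge0 t : 0 <= c t.
  by apply: Rle_mult_inv_pos; [exact: fsum_ge0|exact: Y_gt0].
have sum_c : fsum c = 1.
  rewrite /c /cond_T_given_Y fsumMr -margY_sum_margTY Rinv_r //.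
  by have := Y_gt0 _ m00; lra.
have margTY_row y t : 0 < margXY P x0 y -> margTY P t y = c t * margY P y.
  move=> m; rewrite -(cond_row y m) /cond_T_given_Y; field.
  by have := Y_gt0 _ m; lra.
have margTY_c t y : e y <> 0 -> margTY P t y = c t * margY P y.
  move=> ey; case: (signed_pair_cases y y01) => [[-> _]|[-> _]|ey0].
  - exact: margTY_row.
  - exact: margTY_row.
  - by case: (ey ey0).
have sum_d : fsum d = 0 by rewrite fsumMl fsum_signed_pair Rmult_0_r.
have sum_e : fsum e = 0 := fsum_signed_pair y0 y1.
have Q_ge0 : nonneg (perturb P c d e).
  apply: perturb_rectangle_ge0 => //.
  - by move=> t; rewrite CI_T_X_given_Y_factor // (cond_row y1 m01).
  - by move=> t; rewrite CI_T_X_given_Y_factor.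
  - lra.
  - exact: Rmin_r.
  - exact: Rmin_l.
exists (perturb P c d e); split.
- exact: DeltaP_perturb.
- exact: CI_T_X_given_Y_perturb.
- move=> /(congr1 (fun Q => margXY Q x0 y0)).
  by rewrite margXY_perturb // /d /e !signed_pair_l //; lra.
Qed.

Theorem mainTheorem11 (T X Y : finType) (P : T -> X -> Y -> R) :
  is_dist P ->
  CI_T_X_given_Y P ->
  CI_T_Y_given_X P ->
  (exists (x0 : X) (y0 : Y),
      0 < margXY P x0 y0 /\
      H_X_given_Y_eq P y0 <> 0 /\
      H_Y_given_X_eq P x0 <> 0) ->
  exists Q1 Q2 : T -> X -> Y -> R,
    in_argmax_condH P Q1 /\ in_argmax_condH P Q2 /\ Q1 <> Q2.
Proof.
move=> HP CIY CIX [x0 [y0 [m00 [HX HY]]]].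
have m_ge0 x y : 0 <= margXY P x y := margXY_ge0 P x y HP.1.
have [x1 x10 m10] := entropy_neq0_support (m_ge0^~ y0) m00 HX.
have [y1 y10 m01] := entropy_neq0_support (m_ge0 x0) m00 HY.
have [Q [DQ CIQ QP]] :=
  exists_CI_in_DeltaP_neq HP CIY CIX (nesym x10) (nesym y10) m00 m10 m01.
have DP : DeltaP P P by [].
exists P, Q; split; [|split]; last exact: nesym.
- exact: in_argmax_condH_CI.
- exact: in_argmax_condH_CI.
Qed.
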